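(* For each $\alpha>0$ let $X_\alpha=(x_1,x_2,x_3)$ be as in the context, and set $y_1=x_1$, $y_2=x_2$, $y_3=x_3+\frac{x_1x_2}{2}$, viewed as functions of $(u,v)$. Let $(\hat u,\hat v)\in\mathbb{R}^2$, and for $\alpha>0$ let $u_\alpha=\frac{\hat u}{\alpha}$ and $v_\alpha=\frac{4\ln\alpha+\hat v}{2\alpha}$. Then, as $\alpha\to+\infty$, $$y_1(u_\alpha,v_\alpha)\to\frac{\sin\hat u}{4}e^{\hat v/2},\qquad y_2(u_\alpha,v_\alpha)\to0,\qquad y_3(u_\alpha,v_\alpha)\to-\frac{\cos\hat u}{4}e^{\hat v/2}.$$
   Context: $\mathrm{Nil}_3$ is $\mathbb{R}^3$ with the metric $dx_1^2+dx_2^2+\big(dx_3+\tfrac12(x_2dx_1-x_1dx_2)\big)^2$. For $\alpha>0$ and $\theta\in\mathbb{R}$ set $C_{\alpha,\theta}=\frac{\sin(2\theta)}{2\alpha}$ and $P_{\alpha,\theta}(x)=\alpha^2+\cos(2\theta)x^2-C_{\alpha,\theta}^2x^4$. Let $\theta^+_\alpha=\pi/2$ if $\alpha>1$, and $\theta^+_\alpha=\frac12\arccos(1-2\alpha^2)$ if $\alpha\le1$. Let $$L(\alpha,\theta)=\int_{-1}^1\frac{2\alpha C_{\alpha,\theta}^2x^2-\alpha\cos(2\theta)+C_{\alpha,\theta}^2x^2\sqrt{P_{\alpha,\theta}(x)}}{\sqrt{(1-x^2)P_{\alpha,\theta}(x)}(\alpha+\sqrt{P_{\alpha,\theta}(x)})}dx.$$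 Let $\theta=\tilde\theta_\alpha$ be the unique $\theta\in(0,\theta^+_\alpha)\cap(0,\pi/4)$ with $L(\alpha,\theta)=0$, and $C=C_{\alpha,\theta}$. Let $\varphi$ solve $\varphi'^2=P_{\alpha,\theta}(\cos\varphi)$ with $\varphi(0)=0$ and $\varphi'(0)\le0$. Define $\beta'=C\cos^2\varphi$ with $\beta(0)=0$, and $G'=\frac{C^2\cos^2\varphi-\cos 2\theta}{\alpha-\varphi'}$ with $G(0)=0$. Put $A=\alpha v+\beta(u)$ and $X_\alpha(u,v)=(x_1,x_2,x_3)$ with $x_1=\frac{G'}{\alpha}\cos\varphi\sinh A-\frac C\alpha\sin\varphi\cosh A$, $x_2=Cv-G$, $x_3=-\frac{x_1x_2}2+\frac C\alpha(\frac{G'}{\alpha}-1)\cos\varphi\cosh A-\frac1\alpha(\frac{C^2}\alpha+G')\sin\varphi\sinh A$, where $\varphi,G,G'$ are evaluated at $u$. All these quantities depend on $\alpha$. *)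

From Stdlib Require Import Reals Lra ClassicalEpsilon.
From Coquelicot Require Import Coquelicot.
Open Scope R_scope.

Definition Cc (a th : R) : R := sin (2 * th) / (2 * a).

Definition Pp (a th x : R) : R := a ^ 2 + cos (2 * th) * x ^ 2 - (Cc a th) ^ 2 * x ^ 4.

Definition theta_plus (a : R) : R :=
  if Rlt_dec 1 a then PI / 2 else acos (1 - 2 * a ^ 2) / 2.

Definition L_integrand (a th x : R) : R :=
  (2 * a * (Cc a th) ^ 2 * x ^ 2 - a * cos (2 * th)
     + (Cc a th) ^ 2 * x ^ 2 * sqrt (Pp a th x))
  / (sqrt ((1 - x ^ 2) * Pp a th x) * (a + sqrt (Pp a th x))).

Definition L_vanishes (a th : R) : Prop :=
  is_RInt_gen (L_integrand a th) (at_right (-1)) (at_left 1) 0.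

Definition theta_admissible (a th : R) : Prop :=
  0 < th < theta_plus a /\ 0 < th < PI / 4 /\ L_vanishes a th.

Definition theta_tilde (a : R) : R :=
  epsilon (inhabits 0)
    (fun th => theta_admissible a th /\
               forall th', theta_admissible a th' -> th' = th).

Definition CC (a : R) : R := Cc a (theta_tilde a).

Definition is_phi (a : R) (phi : R -> R) : Prop :=
  (forall u, ex_derive phi u /\
     (Derive phi u) ^ 2 = Pp a (theta_tilde a) (cos (phi u)))
  /\ phi 0 = 0 /\ Derive phi 0 <= 0.

Definition Gp (a : R) (phi : R -> R) (u : R) : R :=
  ((CC a) ^ 2 * (cos (phi u)) ^ 2 - cos (2 * theta_tilde a)) / (a - Derive phi u).

Definition Gf (a : R) (phi : R -> R) (u : R) : R := RInt (Gp a phi) 0 u.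

Definition betaf (a : R) (phi : R -> R) (u : R) : R :=
  RInt (fun s => CC a * (cos (phi s)) ^ 2) 0 u.

Definition Af (a : R) (phi : R -> R) (u v : R) : R := a * v + betaf a phi u.

Definition x1 (a : R) (phi : R -> R) (u v : R) : R :=
  Gp a phi u / a * cos (phi u) * sinh (Af a phi u v)
  - CC a / a * sin (phi u) * cosh (Af a phi u v).

Definition x2 (a : R) (phi : R -> R) (u v : R) : R := CC a * v - Gf a phi u.

Definition x3 (a : R) (phi : R -> R) (u v : R) : R :=
  - (x1 a phi u v * x2 a phi u v) / 2
  + CC a / a * (Gp a phi u / a - 1) * cos (phi u) * cosh (Af a phi u v)
  - 1 / a * ((CC a) ^ 2 / a + Gp a phi u) * sin (phi u) * sinh (Af a phi u v).

Definition y1 (a : R) (phi : R -> R) (u v : R) : R := x1 a phi u v.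
Definition y2 (a : R) (phi : R -> R) (u v : R) : R := x2 a phi u v.
Definition y3 (a : R) (phi : R -> R) (u v : R) : R :=
  x3 a phi u v + x1 a phi u v * x2 a phi u v / 2.

(* Write [c = cos 2θ]. The substitution [x = cos t] turns [L(α, θ)] into
   [∫_0^π g_α(c, cos² t) dt] with [∂g_α/∂c ≈ -1/(2α) < 0], so for [α ≥ 10] it is strictly
   decreasing in [c], positive at [c = 0] and negative at [c = 2/α²]: the angle [θ̃_α]
   exists, is unique and satisfies [0 < cos 2θ̃_α < 2/α²]. Hence [αC → 1/2] and
   [P(cos φ) = α² + O(1)]; since [φ'] never vanishes, Darboux's theorem forces
   [φ' = -√P(cos φ) = -α + O(1/α)]. At [u = û/α] this gives [φ → -û] and
   [β, G, αG' → 0], while [αv = 2 ln α + v̂/2] makes [e^(±A) ≈ α^(±2) e^(±v̂/2)];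
   only the terms of [X_α] carrying [α² e^A] survive. *)

From Stdlib Require Import Reals Ranalysis5 Lra Psatz ClassicalEpsilon.
From Coquelicot Require Import Coquelicot.
Open Scope R_scope.

(** * The quartic [P] and the integrand of [L] *)

(* [C^2] and [P] of the context in the variables [c = cos 2θ] and [w = x^2]. *)
Definition Csq (a c : R) : R := (1 - c ^ 2) / (4 * a ^ 2).
Definition Pw (a c w : R) : R := a ^ 2 + c * w - Csq a c * w ^ 2.
Definition sqrtPw (a c w : R) : R := sqrt (Pw a c w).

(* [L_integrand a θ x = Lw a (cos 2θ) (x^2) / sqrt (1 - x^2)], see [L_integrand_eq]. *)
Definition Lw (a c w : R) : R :=
  (2 * Csq a c * w - c) / sqrtPw a c w + (c - Csq a c * w) / (a + sqrtPw a c w).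

Record regime (a c w : R) : Prop := Regime {
  regime_a : 10 <= a; regime_c : -1 <= c <= 1; regime_w : 0 <= w <= 1 }.

Lemma inv_bounds a : 10 <= a -> 0 < /a <= 1/10 /\ a * /a = 1.
Proof.
intros Ha; split; [split|].
- apply Rinv_0_lt_compat; lra.
- unfold Rdiv; rewrite Rmult_1_l; apply Rinv_le_contravar; lra.
- field; lra.
Qed.

Lemma Csq_w_bounds a c w : regime a c w -> 0 <= Csq a c * w <= (/a)^2 / 4.
Proof.
intros [Ha [Hc1 Hc2] [Hw1 Hw2]].
replace (Csq a c * w) with ((1 - c^2) * w * (/a)^2 / 4) by (unfold Csq; field; lra).
assert (0 <= (/a)^2) by apply pow2_ge_0.
assert (0 <= 1 - c^2 <= 1) by nra.
assert (0 <= (1 - c^2) * w <= 1) by nra.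
split; nra.
Qed.

Lemma Pw_bounds a c w : regime a c w -> a^2 - 3/2 <= Pw a c w <= a^2 + 1.
Proof.
intros H. pose proof (Csq_w_bounds _ _ _ H) as HK. destruct H as [Ha [Hc1 Hc2] [Hw1 Hw2]].
destruct (inv_bounds a Ha) as [Ea Ea'].
unfold Pw. replace (Csq a c * w^2) with (Csq a c * w * w) by ring.
assert (-1 <= c * w <= 1) by nra.
assert (0 <= Csq a c * w * w <= 1/2) by (split; nra).
split; nra.
Qed.

Lemma sqrtPw_bounds a c w : regime a c w ->
  0 < sqrtPw a c w /\ a - /a <= sqrtPw a c w <= a + /a /\ sqrtPw a c w ^ 2 = Pw a c w.
Proof.
intros H. pose proof (Pw_bounds _ _ _ H) as [P1 P2]. pose proof (regime_a _ _ _ H) as Ha.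
destruct (inv_bounds a Ha) as [Ea Ea'].
assert (Hs : sqrtPw a c w ^ 2 = Pw a c w).
{ unfold sqrtPw. rewrite <- Rsqr_pow2. apply Rsqr_sqrt. nra. }
assert (0 <= sqrtPw a c w) by apply sqrt_pos.
assert (0 <= a - /a) by nra.
split; [unfold sqrtPw; apply sqrt_lt_R0; nra | split; [split; nra | exact Hs]].
Qed.

Lemma Rinv_sqrtPw_bounds a p : 10 <= a -> a - /a <= p <= a + /a ->
  99/100 * /a <= /p <= 102/100 * /a /\ 49/100 * /a <= /(a + p) <= 51/100 * /a.
Proof.
intros Ha Hp. destruct (inv_bounds a Ha) as [[E1 E2] E3]. set (e := /a) in *.
assert (0 < p) by nra.
assert (I1 : p * /p = 1) by (field; lra).
assert (I2 : (a + p) * /(a + p) = 1) by (field; lra).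
assert (0 < /p) by (apply Rinv_0_lt_compat; lra).
assert (0 < /(a + p)) by (apply Rinv_0_lt_compat; lra).
assert (99/100 <= e * p <= 101/100) by nra.
assert (198/100 <= e * (a + p) <= 202/100) by nra.
split; split; nra.
Qed.

Lemma Lw_eq a c w : regime a c w ->
  Lw a c w = (2 * a * Csq a c * w - a * c + Csq a c * w * sqrtPw a c w)
             / (sqrtPw a c w * (a + sqrtPw a c w)).
Proof.
intros H. pose proof (sqrtPw_bounds _ _ _ H) as [P1 _]. pose proof (regime_a _ _ _ H).
unfold Lw. field. split; lra.
Qed.

(** * Strict monotonicity of [Lw] in [c] *)

(* [Kd] and [pd] are the [c]-derivatives of [K = C^2 w] and [p = √P]. *)
Definition dLw_dc (a c w : R) : R :=
  let K := Csq a c * w in let Kd := - c * w / (2 * a^2) in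
  let p := sqrtPw a c w in let pd := (w - Kd * w) / (2 * p) in
  (2 * Kd - 1) / p - (2 * K - c) * pd / p^2 + (1 - Kd) / (a + p) - (c - K) * pd / (a + p)^2.

Lemma is_derive_Pw_c a c w : 0 < a ->
  is_derive (fun c => Pw a c w) c (w + c * w * w / (2 * a^2)).
Proof. intros. unfold Pw, Csq. auto_derive; [auto | field; lra]. Qed.

Lemma is_derive_Lw_c a c w : regime a c w -> is_derive (fun c => Lw a c w) c (dLw_dc a c w).
Proof.
intros H. pose proof (sqrtPw_bounds _ _ _ H) as [P1 _]. pose proof (regime_a _ _ _ H).
pose proof (Pw_bounds _ _ _ H).
assert (HP : 0 < Pw a c w) by nra.
assert (HD := is_derive_Pw_c a c w ltac:(lra)).
unfold Lw, dLw_dc, sqrtPw, Csq. auto_derive;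
  (match goal with |- context [sqrt ?X] =>
     replace X with (Pw a c w) by (unfold Pw, Csq; field; lra) end);
  fold (sqrtPw a c w).
- repeat split; try lra; eexists; exact HD.
- replace (Derive (fun x : R => Pw a x w) c) with (w + c * w * w / (2 * a^2))
    by (symmetry; apply is_derive_unique; exact HD).
  set (p := sqrtPw a c w) in *. field. lra.
Qed.

(* The first term [-1/p ≈ -1/a] dominates: everything else is [O(1/a^3)] or
   contributes [+1/(a+p) ≈ 1/(2a)]. *)
Lemma dLw_dc_bounds_alg (e K Kd pd ip iq c : R) :
  0 < e <= 1/10 -> 0 <= K <= e^2/4 -> -(e^2/2) <= Kd <= e^2/2 -> -1 <= c <= 1 ->
  0 <= pd <= ip -> 99/100*e <= ip <= 102/100*e -> 49/100*e <= iq <= 51/100*e ->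
  -2*e <= (2*Kd - 1)*ip - (2*K - c)*pd*ip^2 + (1 - Kd)*iq - (c - K)*pd*iq^2 <= -e/4.
Proof.
intros He HK HKd Hc Hpd Hip Hiq.
assert (e^2 <= 1/100) by nra.
assert (e^3 <= e/100) by nra.
assert (-(104/100)*e <= (2*Kd - 1)*ip <= -(98/100)*e) by (split; nra).
assert (0 <= ip^2 <= (102/100*e)^2) by (split; nra).
assert (0 <= pd*ip^2 <= (102/100*e)^3).
{ split; [apply Rmult_le_pos; lra|].
  replace ((102/100*e)^3) with ((102/100*e)*(102/100*e)^2) by ring.
  apply Rmult_le_compat; lra. }
assert (B : Rabs ((2*K - c)*pd*ip^2) <= 101/100 * (102/100*e)^3).
{ rewrite Rmult_assoc, Rabs_mult, (Rabs_right (pd*ip^2)) by lra.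
  apply Rmult_le_compat; try lra; [apply Rabs_pos | apply Rabs_le; nra]. }
assert (0 <= (1 - Kd)*iq <= 52/100*e) by (split; nra).
assert (0 <= iq^2 <= (51/100*e)^2) by (split; nra).
assert (0 <= pd*iq^2 <= (102/100*e)*(51/100*e)^2).
{ split; [apply Rmult_le_pos; lra|]. apply Rmult_le_compat; lra. }
assert (D : Rabs ((c - K)*pd*iq^2) <= 101/100 * ((102/100*e)*(51/100*e)^2)).
{ rewrite Rmult_assoc, Rabs_mult, (Rabs_right (pd*iq^2)) by lra.
  apply Rmult_le_compat; try lra; [apply Rabs_pos | apply Rabs_le; nra]. }
apply Rabs_le_between in B. apply Rabs_le_between in D.
split; nra.
Qed.

Lemma dLw_dc_bounds a c w : regime a c w -> -2 * /a <= dLw_dc a c w <= -(/a)/4.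
Proof.
intros H. pose proof (sqrtPw_bounds _ _ _ H) as [P1 [P2 _]].
pose proof (Csq_w_bounds _ _ _ H) as HK. destruct H as [Ha [Hc1 Hc2] [Hw1 Hw2]].
destruct (inv_bounds a Ha) as [[E1 E2] E3].
destruct (Rinv_sqrtPw_bounds a (sqrtPw a c w) Ha P2) as [Ip Iq].
set (p := sqrtPw a c w) in *. set (K := Csq a c * w) in *.
set (Kd := - c * w / (2*a^2)).
assert (HKd : Kd = - c * w * (/a)^2 / 2) by (unfold Kd; field; lra).
assert (0 <= (/a)^2 <= 1/100) by (split; nra).
assert (BKd : -((/a)^2/2) <= Kd <= (/a)^2/2).
{ rewrite HKd. assert (-1 <= c*w <= 1) by (split; nra). split; nra. }
set (pd := (w - Kd*w) / (2*p)).
assert (Hpd : pd = ((w - Kd*w)/2) * /p) by (unfold pd; field; lra).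
assert (0 <= (w - Kd*w)/2 <= 1) by (split; nra).
assert (Bpd : 0 <= pd <= /p) by (rewrite Hpd; split; nra).
replace (dLw_dc a c w) with
  ((2*Kd - 1)*/p - (2*K - c)*pd*(/p)^2 + (1 - Kd)*/(a+p) - (c - K)*pd*(/(a+p))^2)
  by (unfold dLw_dc; fold p K Kd pd; field; split; lra).
apply (dLw_dc_bounds_alg (/a)); auto; lra.
Qed.

Lemma Lw_increment_bounds a w c1 c2 : 10 <= a -> 0 <= w <= 1 -> -1 <= c1 <= c2 -> c2 <= 1 ->
  -2 * /a * (c2 - c1) <= Lw a c2 w - Lw a c1 w <= -(/a)/4 * (c2 - c1).
Proof.
intros Ha Hw Hc1 Hc2.
assert (Hreg : forall c, c1 <= c <= c2 -> regime a c w) by (constructor; lra).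
destruct (MVT_gen (fun c => Lw a c w) c1 c2 (fun c => dLw_dc a c w)) as [xi [Hxi E]];
  rewrite ?Rmin_left, ?Rmax_right in * by lra.
- intros c Hc. apply is_derive_Lw_c, Hreg; lra.
- intros c Hc. apply continuity_pt_filterlim, (ex_derive_continuous (fun c => Lw a c w)).
  eexists. apply is_derive_Lw_c, Hreg; lra.
- pose proof (dLw_dc_bounds _ _ _ (Hreg xi Hxi)). rewrite E. split; nra.
Qed.

Lemma Lw_decreasing a w c1 c2 : 10 <= a -> 0 <= w <= 1 -> -1 <= c1 < c2 -> c2 <= 1 ->
  Lw a c2 w < Lw a c1 w.
Proof.
intros Ha Hw Hc1 Hc2. destruct (inv_bounds a Ha) as [[E1 E2] _].
pose proof (Lw_increment_bounds a w c1 c2 Ha Hw ltac:(lra) Hc2). nra.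
Qed.

Lemma Lw_lipschitz a w c1 c2 : 10 <= a -> 0 <= w <= 1 -> -1 <= c1 <= 1 -> -1 <= c2 <= 1 ->
  Rabs (Lw a c2 w - Lw a c1 w) <= Rabs (c2 - c1).
Proof.
intros Ha Hw Hc1 Hc2. destruct (inv_bounds a Ha) as [[E1 E2] _].
destruct (Rle_dec c1 c2).
- pose proof (Lw_increment_bounds a w c1 c2 Ha Hw ltac:(lra) ltac:(lra)).
  rewrite (Rabs_right (c2 - c1)) by lra. apply Rabs_le; nra.
- pose proof (Lw_increment_bounds a w c2 c1 Ha Hw ltac:(lra) ltac:(lra)).
  rewrite (Rabs_left (c2 - c1)) by lra. apply Rabs_le; nra.
Qed.

Lemma ex_derive_Lw_w a c w : regime a c w -> ex_derive (fun w => Lw a c w) w.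
Proof.
intros H. pose proof (sqrtPw_bounds _ _ _ H) as [P1 _]. pose proof (Pw_bounds _ _ _ H).
pose proof (regime_a _ _ _ H).
assert (0 < Pw a c w) by nra.
unfold Lw, sqrtPw. auto_derive; repeat split; try lra; fold (sqrtPw a c w); try lra.
all: unfold Pw; auto_derive; auto.
Qed.

(** * [L] as a function of [c] *)

Lemma continuity_pt_locally_lipschitz f x r K : 0 < r -> 0 <= K ->
  (forall y, Rabs (y - x) < r -> Rabs (f y - f x) <= K * Rabs (y - x)) -> continuity_pt f x.
Proof.
intros Hr HK Hf eps Heps.
exists (Rmin r (eps / (K + 1))). split; [apply Rmin_pos; [lra | apply Rdiv_lt_0_compat; lra]|].
intros y [_ Hy]. simpl in *. unfold R_dist in *.
pose proof (Rmin_l r (eps / (K + 1))). pose proof (Rmin_r r (eps / (K + 1))).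
apply Rle_lt_trans with (K * Rabs (y - x)); [apply Hf; lra|].
assert (Rabs (y - x) * (K + 1) < eps).
{ apply Rmult_lt_reg_r with (/(K + 1)); [apply Rinv_0_lt_compat; lra|].
  rewrite Rmult_assoc, Rinv_r, Rmult_1_r by lra. unfold Rdiv in *; lra. }
pose proof (Rabs_pos (y - x)). nra.
Qed.

Definition Lc (a c : R) : R := RInt (fun t => Lw a c (cos t ^ 2)) 0 PI.

Lemma cos_sq_bounds t : 0 <= cos t ^ 2 <= 1.
Proof. pose proof (COS_bound t). split; nra. Qed.

Lemma continuous_Lw_cos_sq a c t : 10 <= a -> -1 <= c <= 1 ->
  continuous (fun t => Lw a c (cos t ^ 2)) t.
Proof.
intros Ha Hc. apply (ex_derive_continuous (fun t => Lw a c (cos t ^ 2))).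

apply (ex_derive_comp (fun w => Lw a c w) (fun t => cos t ^ 2)).
- apply ex_derive_Lw_w. pose proof (cos_sq_bounds t). constructor; lra.
- auto_derive. auto.
Qed.

Lemma ex_RInt_Lw_cos_sq a c x y : 10 <= a -> -1 <= c <= 1 ->
  ex_RInt (fun t => Lw a c (cos t ^ 2)) x y.
Proof. intros. apply (ex_RInt_continuous (V:=R_CompleteNormedModule)). intros. apply continuous_Lw_cos_sq; auto. Qed.

Lemma Lc_decreasing a c1 c2 : 10 <= a -> -1 <= c1 < c2 -> c2 <= 1 -> Lc a c2 < Lc a c1.
Proof.
intros. apply RInt_lt; [apply PI_RGT_0 | | |].
- intros; apply continuous_Lw_cos_sq; lra.
- intros; apply continuous_Lw_cos_sq; lra.
- intros. apply Lw_decreasing; auto. apply cos_sq_bounds.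
Qed.

Lemma Lc_lipschitz a c1 c2 : 10 <= a -> -1 <= c1 <= 1 -> -1 <= c2 <= 1 ->
  Rabs (Lc a c2 - Lc a c1) <= PI * Rabs (c2 - c1).
Proof.
intros. unfold Lc.
rewrite <- (RInt_minus (V:=R_CompleteNormedModule)) by (apply ex_RInt_Lw_cos_sq; lra).
replace (PI * Rabs (c2 - c1)) with ((PI - 0) * Rabs (c2 - c1)) by ring.
apply abs_RInt_le_const.
- pose proof PI_RGT_0; lra.
- apply (ex_RInt_minus (V:=R_CompleteNormedModule)); apply ex_RInt_Lw_cos_sq; lra.
- intros t _. apply Lw_lipschitz; auto. apply cos_sq_bounds.
Qed.

Lemma Lc_continuity_pt a c : 10 <= a -> -1 < c < 1 -> continuity_pt (Lc a) c.
Proof.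
intros Ha Hc. pose proof PI_RGT_0.
apply (continuity_pt_locally_lipschitz _ _ (Rmin (1 + c) (1 - c)) PI);
  [apply Rmin_pos; lra | lra |].
intros y Hy. apply Rabs_lt_between' in Hy.
pose proof (Rmin_l (1 + c) (1 - c)). pose proof (Rmin_r (1 + c) (1 - c)).
apply Lc_lipschitz; lra.
Qed.

Lemma Lc_pos_at_0 a : 10 <= a -> 0 < Lc a 0.
Proof.
intros Ha. unfold Lc. pose proof PI_RGT_0.
assert (Hpos : forall x y, x < y -> (forall t, x < t < y -> 0 < cos t ^ 2) ->
          0 < RInt (fun t => Lw a 0 (cos t ^ 2)) x y).
{ intros x y Hxy Hc. apply RInt_gt_0; auto.
  - intros t Ht. pose proof (cos_sq_bounds t) as [_ Hw]. specialize (Hc t Ht).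
    assert (Hreg : regime a 0 (cos t ^ 2)) by (constructor; lra).
    pose proof (sqrtPw_bounds _ _ _ Hreg) as [P1 [P2 _]].
    assert (0 < Csq a 0 * cos t ^ 2) by (unfold Csq; apply Rmult_lt_0_compat; [|lra];
      apply Rdiv_lt_0_compat; nra).
    rewrite Lw_eq by auto. apply Rdiv_lt_0_compat; nra.
  - intros; apply continuous_Lw_cos_sq; lra. }
rewrite <- (RInt_Chasles (V:=R_CompleteNormedModule) _ 0 (PI/2) PI)
  by (apply ex_RInt_Lw_cos_sq; lra).
assert (0 < RInt (fun t => Lw a 0 (cos t ^ 2)) 0 (PI/2)).
{ apply Hpos; [lra|]. intros t Ht. assert (0 < cos t) by (apply cos_gt_0; lra). nra. }
assert (0 < RInt (fun t => Lw a 0 (cos t ^ 2)) (PI/2) PI).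
{ apply Hpos; [lra|]. intros t Ht. assert (cos t < 0) by (apply cos_lt_0; lra). nra. }
change (0 < RInt (fun t => Lw a 0 (cos t ^ 2)) 0 (PI / 2)
          + RInt (fun t => Lw a 0 (cos t ^ 2)) (PI / 2) PI).
lra.
Qed.

Lemma Lw_neg a w : 10 <= a -> 0 <= w <= 1 -> Lw a (2 / a^2) w < 0.
Proof.
intros Ha Hw. destruct (inv_bounds a Ha) as [[E1 E2] E3].
assert (Hc : 2 / a^2 = 2 * (/a)^2) by (field; lra).
assert ((/a)^2 <= 1/100) by nra.
assert (Hreg : regime a (2 / a^2) w) by (constructor; rewrite ?Hc; lra || nra).
pose proof (sqrtPw_bounds _ _ _ Hreg) as [P1 [P2 _]].
pose proof (Csq_w_bounds _ _ _ Hreg) as [K1 K2].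
rewrite Lw_eq by auto. apply Rdiv_neg_pos; [|nra].
set (K := Csq a (2 / a^2) * w) in *. set (p := sqrtPw a (2 / a^2) w) in *.
replace (2 * a * Csq a (2 / a^2) * w) with (2 * a * K) by (unfold K; ring).
rewrite Hc.
assert (2 * a * K <= (/a) / 2) by nra.
assert (K * p <= (/a)^2 / 4 * (a + /a)) by nra.
nra.
Qed.

Lemma Lc_neg a : 10 <= a -> Lc a (2 / a^2) < 0.
Proof.
intros Ha. destruct (inv_bounds a Ha) as [[E1 E2] E3].
assert (2 / a^2 = 2 * (/a)^2) by (field; lra).
apply Rlt_le_trans with (RInt (fun _ => 0) 0 PI).
- apply RInt_lt; [apply PI_RGT_0 | intros; apply continuous_const | |].
  + intros; apply continuous_Lw_cos_sq; [lra | split; nra].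
  + intros. apply Lw_neg; auto. apply cos_sq_bounds.
- rewrite RInt_const. unfold scal; simpl; unfold mult; simpl. lra.
Qed.

Lemma Lc_root_exists a : 10 <= a -> exists c, 0 < c < 2 / a^2 /\ Lc a c = 0.
Proof.
intros Ha. destruct (inv_bounds a Ha) as [[E1 E2] E3].
assert (2 / a^2 = 2 * (/a)^2) by (field; lra).
assert (0 < 2 / a^2 < 1) by nra.
pose proof (Lc_pos_at_0 a Ha). pose proof (Lc_neg a Ha).
destruct (IVT_interv (fun c => - Lc a c) 0 (2 / a^2)) as [c [Hc Hz]]; try lra.
- intros c Hc. apply continuity_pt_opp, Lc_continuity_pt; lra.
- exists c. split; [|lra].
  destruct (Req_dec c 0) as [->|]; [lra|].
  destruct (Req_dec c (2 / a^2)) as [->|]; lra.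
Qed.

(** * The improper integral [L] *)

Lemma filterlim_at_left_ext (f g : R -> R) x0 d : 0 < d -> continuous g x0 ->
  (forall y, x0 - d < y < x0 -> g y = f y) -> filterlim f (at_left x0) (locally (g x0)).
Proof.
intros Hd Hg He. apply (filterlim_ext_loc g f).
- exists (mkposreal d Hd). intros y Hy Hy1. apply He.
  apply Rabs_lt_between' in Hy. simpl in Hy. lra.
- eapply filterlim_filter_le_1; [|exact Hg].
  intros P [eps HP]. exists eps. intros y Hy _. apply HP; auto.
Qed.

Lemma filterlim_at_right_ext (f g : R -> R) x0 d : 0 < d -> continuous g x0 ->
  (forall y, x0 < y < x0 + d -> g y = f y) -> filterlim f (at_right x0) (locally (g x0)).
Proof.
intros Hd Hg He. apply (filterlim_ext_loc g f).
- exists (mkposreal d Hd). intros y Hy Hy1. apply He.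
  apply Rabs_lt_between' in Hy. simpl in Hy. lra.
- eapply filterlim_filter_le_1; [|exact Hg].
  intros P [eps HP]. exists eps. intros y Hy _. apply HP; auto.
Qed.

Lemma continuous_sqrt_1_minus_sq x : continuous (fun x => sqrt (1 - x^2)) x.
Proof.
apply continuous_sqrt_comp, (ex_derive_continuous (fun x => 1 - x^2)). auto_derive. auto.
Qed.

(* Near [±1], [acos] is given by the [atan] formula, which is continuous there. *)
Lemma filterlim_acos_at_left_1 : filterlim acos (at_left 1) (locally 0).
Proof.
set (g := fun x => atan (sqrt (1 - x^2) * / x)).
replace 0 with (g 1)
  by (unfold g; replace (1 - 1^2) with 0 by ring; rewrite sqrt_0, Rmult_0_l; apply atan_0).
apply filterlim_at_left_ext with (d := 1/2); [lra| |].
- apply continuous_atan_comp, (continuous_mult (fun x => sqrt (1 - x^2)) (fun x => / x)).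
  + apply continuous_sqrt_1_minus_sq.
  + apply (ex_derive_continuous (fun x => / x)). auto_derive. lra.
- intros y Hy. unfold g. rewrite acos_atan by lra. unfold Rsqr, Rdiv. repeat f_equal. ring.
Qed.

Lemma filterlim_acos_at_right_m1 : filterlim acos (at_right (-1)) (locally PI).
Proof.
set (g := fun x => PI - atan (sqrt (1 - x^2) * / (-x))).
replace PI with (g (-1))
  by (unfold g; replace (1 - (-1)^2) with 0 by ring; rewrite sqrt_0, Rmult_0_l, atan_0; ring).
apply filterlim_at_right_ext with (d := 1/2); [lra| |].
- apply (continuous_minus (fun _ => PI)); [apply continuous_const|].
  apply continuous_atan_comp, (continuous_mult (fun x => sqrt (1 - x^2)) (fun x => / (-x))).
  + apply continuous_sqrt_1_minus_sq.
  + apply (ex_derive_continuous (fun x => / (-x))). auto_derive. lra.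
- intros y Hy. unfold g.
  replace (acos y) with (PI - acos (-y)) by (rewrite acos_opp; ring).
  rewrite (acos_atan (-y)) by lra. unfold Rsqr, Rdiv. repeat f_equal. ring.
Qed.

Lemma is_derive_acos x : -1 < x < 1 -> is_derive acos x (-1 / sqrt (1 - x^2)).
Proof.
intros Hx. apply is_derive_Reals, (derive_pt_eq_1 _ _ _ (derivable_pt_acos x Hx)).
rewrite derive_pt_acos. unfold Rsqr. repeat f_equal. ring.
Qed.

Definition Lx (a c x : R) : R := Lw a c (x^2) / sqrt (1 - x^2).

Definition Lprim (a c y : R) : R := RInt (fun t => Lw a c (cos t ^ 2)) 0 y.

Lemma is_derive_Lprim a c y : 10 <= a -> -1 <= c <= 1 ->
  is_derive (Lprim a c) y (Lw a c (cos y ^ 2)).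
Proof.
intros. apply (is_derive_RInt (V:=R_NormedModule) (fun t => Lw a c (cos t ^ 2)) (Lprim a c) 0 y).
- exists (mkposreal 1 Rlt_0_1). intros b _.
  apply (RInt_correct (V:=R_CompleteNormedModule)), ex_RInt_Lw_cos_sq; auto.
- apply continuous_Lw_cos_sq; auto.
Qed.

Lemma continuous_Lprim a c y : 10 <= a -> -1 <= c <= 1 -> continuous (Lprim a c) y.
Proof. intros. apply (ex_derive_continuous (Lprim a c)). eexists. apply is_derive_Lprim; auto. Qed.

(* The substitution [x = cos t]: [-Lprim (acos x)] is a primitive of [Lx]. *)
Lemma is_derive_Lprim_acos a c x : 10 <= a -> -1 <= c <= 1 -> -1 < x < 1 ->
  is_derive (fun x => - Lprim a c (acos x)) x (Lx a c x).
Proof.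
intros Ha Hc Hx.
assert (Hs : sqrt (1 - x^2) <> 0) by (intro H; apply sqrt_eq_0 in H; nra).
pose proof (is_derive_opp _ _ _
  (is_derive_comp _ acos x _ _ (is_derive_Lprim a c (acos x) Ha Hc) (is_derive_acos x Hx))) as H.
replace (Lx a c x) with (opp (scal (-1 / sqrt (1 - x^2)) (Lw a c (cos (acos x) ^ 2))))
  by (rewrite cos_acos by lra; unfold Lx, opp, scal; simpl; unfold mult; simpl;
      unfold opp; simpl; field; auto).
exact H.
Qed.

Lemma continuous_Lx a c x : 10 <= a -> -1 <= c <= 1 -> -1 < x < 1 -> continuous (Lx a c) x.
Proof.
intros Ha Hc Hx. apply (ex_derive_continuous (Lx a c)).
apply (ex_derive_mult (fun x => Lw a c (x^2)) (fun x => / sqrt (1 - x^2))).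
- apply (ex_derive_comp (fun w => Lw a c w) (fun x => x^2)).
  + apply ex_derive_Lw_w. constructor; nra.
  + auto_derive. auto.
- auto_derive. repeat split; try nra. intro H. apply sqrt_eq_0 in H; nra.
Qed.

Lemma filter_prod_open_interval : filter_prod (at_right (-1)) (at_left 1)
  (fun ab : R * R => forall x, Rmin (fst ab) (snd ab) <= x <= Rmax (fst ab) (snd ab) -> -1 < x < 1).
Proof.
apply (Filter_prod _ _ _ (fun x => -1 < x < 1) (fun x => -1 < x < 1)).
- exists (mkposreal 1 Rlt_0_1). intros y Hy Hy1.
  apply Rabs_lt_between' in Hy. simpl in Hy. lra.
- exists (mkposreal 1 Rlt_0_1). intros y Hy Hy1.
  apply Rabs_lt_between' in Hy. simpl in Hy. lra.
- intros u v Hu Hv x Hx. simpl in Hx. unfold Rmin, Rmax in Hx. destruct Rle_dec; lra.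
Qed.

Lemma is_RInt_gen_Lx a c : 10 <= a -> -1 <= c <= 1 ->
  is_RInt_gen (Lx a c) (at_right (-1)) (at_left 1) (Lc a c).
Proof.
intros Ha Hc. set (Psi := fun x => - Lprim a c (acos x)).
assert (HD : forall x, -1 < x < 1 -> Derive Psi x = Lx a c x)
  by (intros; apply is_derive_unique, is_derive_Lprim_acos; auto).
apply (is_RInt_gen_ext (Derive Psi)).
{ eapply filter_imp; [|exact filter_prod_open_interval].
  intros [u v] H x Hx. apply HD, H. simpl in *. lra. }
replace (Lc a c) with (- Lprim a c 0 - - Lprim a c PI)
  by (unfold Lprim, Lc; rewrite RInt_point; simpl; unfold zero; simpl; ring).
apply is_RInt_gen_Derive.
- eapply filter_imp; [|exact filter_prod_open_interval].
  intros [u v] H x Hx. eexists. apply is_derive_Lprim_acos; auto.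
- eapply filter_imp; [|exact filter_prod_open_interval].
  intros [u v] H x Hx. specialize (H x Hx).
  apply (continuous_ext_loc _ (Lx a c)); [|apply continuous_Lx; auto].
  exists (mkposreal (Rmin (x + 1) (1 - x)) ltac:(apply Rmin_pos; lra)).
  intros y Hy. apply Rabs_lt_between' in Hy. simpl in Hy.
  pose proof (Rmin_l (x + 1) (1 - x)). pose proof (Rmin_r (x + 1) (1 - x)).
  symmetry. apply HD. lra.
- apply (filterlim_comp _ _ _ acos (fun y => - Lprim a c y) _ (locally PI)).
  + apply filterlim_acos_at_right_m1.
  + apply (continuous_opp (Lprim a c)), continuous_Lprim; auto.
- apply (filterlim_comp _ _ _ acos (fun y => - Lprim a c y) _ (locally 0)).
  + apply filterlim_acos_at_left_1.
  + apply (continuous_opp (Lprim a c)), continuous_Lprim; auto.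
Qed.

Lemma Csq_cos a th : 0 < a -> Cc a th ^ 2 = Csq a (cos (2 * th)).
Proof.
intros Ha. pose proof (sin2_cos2 (2 * th)). unfold Rsqr in *.
unfold Cc, Csq. field_simplify; [|lra..]. f_equal. nra.
Qed.

Lemma Pp_eq a th x : 0 < a -> Pp a th x = Pw a (cos (2 * th)) (x^2).
Proof. intros Ha. unfold Pp, Pw. rewrite Csq_cos by auto. ring. Qed.

Lemma L_integrand_eq a th x : 10 <= a -> -1 < x < 1 ->
  L_integrand a th x = Lx a (cos (2 * th)) x.
Proof.
intros Ha Hx. pose proof (COS_bound (2 * th)).
assert (Hreg : regime a (cos (2 * th)) (x^2)) by (constructor; lra || nra).
pose proof (sqrtPw_bounds _ _ _ Hreg) as [P1 _].
assert (0 < sqrt (1 - x^2)) by (apply sqrt_lt_R0; nra).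
unfold L_integrand, Lx. rewrite Pp_eq, Csq_cos, sqrt_mult_alt by nra.
rewrite Lw_eq by auto. fold (sqrtPw a (cos (2 * th)) (x^2)).
field. repeat split; lra.
Qed.

Lemma L_vanishes_iff a th : 10 <= a -> L_vanishes a th <-> Lc a (cos (2 * th)) = 0.
Proof.
intros Ha. pose proof (COS_bound (2 * th)) as Hcos.
assert (HL : is_RInt_gen (L_integrand a th) (at_right (-1)) (at_left 1) (Lc a (cos (2 * th)))).
{ apply (is_RInt_gen_ext (Lx a (cos (2 * th)))); [|apply is_RInt_gen_Lx; auto].
  eapply filter_imp; [|exact filter_prod_open_interval].
  intros [u v] Huv x Hx. symmetry. apply L_integrand_eq; auto. apply Huv. simpl in *. lra. }
unfold L_vanishes. split.
- intros H0. rewrite <- (is_RInt_gen_unique (V:=R_CompleteNormedModule) _ _ HL).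
  exact (is_RInt_gen_unique (V:=R_CompleteNormedModule) _ _ H0).
- intros E. rewrite <- E. exact HL.
Qed.

(** * The angle [θ̃] *)

Lemma Lc_injective a c1 c2 : 10 <= a -> -1 <= c1 <= 1 -> -1 <= c2 <= 1 ->
  Lc a c1 = Lc a c2 -> c1 = c2.
Proof.
intros Ha H1 H2 E. destruct (Rtotal_order c1 c2) as [Hl|[Hl|Hl]]; auto.
- pose proof (Lc_decreasing a c1 c2 Ha ltac:(lra) ltac:(lra)). lra.
- pose proof (Lc_decreasing a c2 c1 Ha ltac:(lra) ltac:(lra)). lra.
Qed.

Lemma theta_admissible_cos a th : 10 <= a -> theta_admissible a th ->
  0 < cos (2 * th) < 1 /\ 0 < sin (2 * th) /\ Lc a (cos (2 * th)) = 0.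
Proof.
intros Ha [_ [Ht HL]]. apply L_vanishes_iff in HL; auto. pose proof PI_RGT_0.
split; [split|split]; auto.
- apply cos_gt_0; lra.
- rewrite <- cos_0. apply cos_decreasing_1; lra.
- apply sin_gt_0; lra.
Qed.

(* For [a > 1] the constraint [θ < θ^+_a = π/2] is implied by [θ < π/4], so the
   admissible [θ] are exactly [acos c / 2] for the unique root [c] of [Lc a]. *)
Lemma theta_tilde_spec a : 10 <= a ->
  theta_admissible a (theta_tilde a) /\ 0 < cos (2 * theta_tilde a) < 2 / a^2.
Proof.
intros Ha.
destruct (Lc_root_exists a Ha) as [c [Hc HLc]].
destruct (inv_bounds a Ha) as [[E1 E2] E3].
assert (2 / a^2 = 2 * (/a)^2) by (field; lra).
assert (2 / a^2 <= 1/50) by nra. pose proof PI_RGT_0.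
assert (Hacos : 0 < acos c < PI/2).
{ rewrite acos_atan by lra. split.
  - rewrite <- atan_0. apply atan_increasing, Rdiv_lt_0_compat; [|lra].
    apply sqrt_lt_R0. unfold Rsqr. nra.
  - pose proof (atan_bound (sqrt (1 - c²) / c)). lra. }
assert (Hadm : theta_admissible a (acos c / 2)).
{ unfold theta_admissible, theta_plus. destruct Rlt_dec; [|lra].
  split; [lra|split; [lra|]].
  apply L_vanishes_iff; auto. replace (2 * (acos c / 2)) with (acos c) by field.
  rewrite cos_acos by lra. auto. }
assert (Huniq : forall th, theta_admissible a th -> th = acos c / 2).
{ intros th Hth. destruct (theta_admissible_cos a th Ha Hth) as [Hcos [_ HL]].
  assert (E : cos (2 * th) = c) by (apply (Lc_injective a); try lra; congruence).
  destruct Hth as [_ [Hth _]]. rewrite <- E, acos_cos by lra. field. }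
assert (Hex : exists th, theta_admissible a th /\
                         forall th', theta_admissible a th' -> th' = th)
  by (exists (acos c / 2); auto).
destruct (epsilon_spec (inhabits 0) _ Hex) as [Htt _].
fold (theta_tilde a) in Htt. split; auto.
destruct (theta_admissible_cos a _ Ha Htt) as [Hcos [_ HL]]. split; [lra|].
destruct (Rtotal_order (cos (2 * theta_tilde a)) (2 / a^2)) as [Hl|[Hl|Hl]]; auto.
- pose proof (Lc_neg a Ha). rewrite <- Hl in *. lra.
- pose proof (Lc_neg a Ha).
  pose proof (Lc_decreasing a (2 / a^2) (cos (2 * theta_tilde a)) Ha ltac:(lra) ltac:(lra)).
  lra.
Qed.

Lemma CC_bounds a : 10 <= a -> 0 < CC a <= / (2 * a) /\ Rabs (a * CC a - 1/2) <= 2 * (/a)^4.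
Proof.
intros Ha. destruct (theta_tilde_spec a Ha) as [Htt Hc].
destruct (theta_admissible_cos a _ Ha Htt) as [_ [Hs _]].
destruct (inv_bounds a Ha) as [[E1 E2] E3].
assert (2 / a^2 = 2 * (/a)^2) by (field; lra).
pose proof (sin2_cos2 (2 * theta_tilde a)). unfold Rsqr in *.
set (s := sin (2 * theta_tilde a)) in *. set (c := cos (2 * theta_tilde a)) in *.
assert (s <= 1) by nra.
unfold CC, Cc. fold (theta_tilde a) s. split; [split|].
- apply Rdiv_lt_0_compat; lra.
- unfold Rdiv. rewrite <- (Rmult_1_l (/(2*a))) at 2.
  apply Rmult_le_compat_r; [apply Rlt_le, Rinv_0_lt_compat|]; lra.
- replace (a * (s / (2 * a)) - 1/2) with ((s - 1) / 2) by (field; lra).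
  assert (1 - s <= c^2) by nra.
  assert (c^2 <= 4 * (/a)^4) by nra.
  apply Rabs_le. split; nra.
Qed.

(** * The sign of [φ'] *)

Lemma is_derive_sign_near f x l : is_derive f x l -> l <> 0 ->
  exists d, 0 < d /\ forall h, h <> 0 -> Rabs h < d -> 0 < (f (x + h) - f x) / h * l.
Proof.
intros H Hl. apply is_derive_Reals in H.
destruct (H (Rabs l)) as [d Hd]; [apply Rabs_pos_lt; auto|].
exists d. split; [apply cond_pos|]. intros h Hh Hhd.
specialize (Hd h Hh Hhd). apply Rabs_lt_between' in Hd.
destruct (Rle_dec 0 l); [rewrite Rabs_right in Hd | rewrite Rabs_left in Hd]; nra.
Qed.

(* Darboux: the minimum of [f] on [[x, y]] is interior, since [f] decreases
   just after [x] and increases just before [y]. *)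
Lemma Darboux_zero f x y : (forall t, ex_derive f t) -> x < y ->
  Derive f x < 0 -> 0 < Derive f y -> exists m, x < m < y /\ Derive f m = 0.
Proof.
intros Hd Hxy Hx Hy.
destruct (continuity_ab_min f x y ltac:(lra)) as [m [Hmin Hm]].
{ intros t _. apply continuity_pt_filterlim, (ex_derive_continuous f), Hd. }
assert (Hmx : m <> x).
{ intros ->.
  destruct (is_derive_sign_near f x _ (Derive_correct _ _ (Hd x)) ltac:(lra)) as [d [Hd0 Hs]].
  pose proof (Rmin_l (d/2) ((y - x)/2)). pose proof (Rmin_r (d/2) ((y - x)/2)).
  set (h := Rmin (d/2) ((y - x)/2)) in *.
  assert (0 < h) by (apply Rmin_pos; lra).
  specialize (Hs h ltac:(lra) ltac:(rewrite Rabs_right; lra)).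
  specialize (Hmin (x + h) ltac:(lra)).
  assert (Hq : 0 <= (f (x + h) - f x) / h) by (apply Rdiv_le_0_compat; lra).
  nra. }
assert (Hmy : m <> y).
{ intros ->.
  destruct (is_derive_sign_near f y _ (Derive_correct _ _ (Hd y)) ltac:(lra)) as [d [Hd0 Hs]].
  pose proof (Rmin_l (d/2) ((y - x)/2)). pose proof (Rmin_r (d/2) ((y - x)/2)).
  set (h := Rmin (d/2) ((y - x)/2)) in *.
  assert (0 < h) by (apply Rmin_pos; lra).
  specialize (Hs (-h) ltac:(lra) ltac:(rewrite Rabs_left; lra)).
  specialize (Hmin (y + - h) ltac:(lra)).
  assert (Hq : (f (y + - h) - f y) / - h <= 0).
  { replace ((f (y + - h) - f y) / - h) with (- ((f (y + - h) - f y) / h)) by (field; lra).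
    assert (0 <= (f (y + - h) - f y) / h) by (apply Rdiv_le_0_compat; lra). lra. }
  nra. }
exists m. split; [lra|].
rewrite <- (Derive_Reals f m (ex_derive_Reals_0 f m (Hd m))).
apply (deriv_minimum f x y m); try lra.
intros t Ht1 Ht2. apply Hmin. lra.
Qed.

Lemma Derive_sign_constant f x y : (forall t, ex_derive f t) -> (forall t, Derive f t <> 0) ->
  Derive f x < 0 -> Derive f y < 0.
Proof.
intros Hd Hnz Hx.
destruct (Rlt_dec (Derive f y) 0) as [|Hy]; auto. exfalso.
assert (Hy' : 0 < Derive f y) by (specialize (Hnz y); lra).
destruct (Rtotal_order x y) as [Hxy|[<-|Hxy]]; [| lra |].
- destruct (Darboux_zero f x y Hd Hxy Hx Hy') as [m [_ Hm]]. exact (Hnz m Hm).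
- destruct (Darboux_zero (fun t => - f t) y x) as [m [_ Hm]].
  + intros t. apply (ex_derive_opp f), Hd.
  + exact Hxy.
  + rewrite Derive_opp. lra.
  + rewrite Derive_opp. lra.
  + rewrite Derive_opp in Hm. apply (Hnz m). lra.
Qed.

Lemma regime_theta_tilde a t : 10 <= a -> regime a (cos (2 * theta_tilde a)) (cos t ^ 2).
Proof.
intros Ha. destruct (theta_tilde_spec a Ha) as [_ Hc].
destruct (inv_bounds a Ha) as [[E1 E2] E3].
assert (2 / a^2 = 2 * (/a)^2) by (field; lra).
pose proof (cos_sq_bounds t). constructor; try lra. split; nra.
Qed.

Lemma Derive_phi a f u : 10 <= a -> is_phi a f ->
  Derive f u = - sqrtPw a (cos (2 * theta_tilde a)) (cos (f u) ^ 2).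
Proof.
intros Ha [Hd [_ H0]].
assert (Hsq : forall t, Derive f t ^ 2 = sqrtPw a (cos (2 * theta_tilde a)) (cos (f t) ^ 2) ^ 2).
{ intros t. destruct (Hd t) as [_ ->]. rewrite Pp_eq by lra.
  destruct (sqrtPw_bounds _ _ _ (regime_theta_tilde a (f t) Ha)) as [_ [_ ->]]. reflexivity. }
assert (Hpos : forall t, 0 < sqrtPw a (cos (2 * theta_tilde a)) (cos (f t) ^ 2))
  by (intros t; apply (sqrtPw_bounds _ _ _ (regime_theta_tilde a (f t) Ha))).
assert (Hnz : forall t, Derive f t <> 0).
{ intros t Ht. specialize (Hsq t). specialize (Hpos t). rewrite Ht in Hsq. nra. }
assert (Hneg : Derive f u < 0).
{ apply (Derive_sign_constant f 0); auto; [intros; apply Hd|]. specialize (Hnz 0). lra. }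
specialize (Hsq u). specialize (Hpos u).
set (p := sqrtPw a (cos (2 * theta_tilde a)) (cos (f u) ^ 2)) in *.
assert (Hfac : (Derive f u + p) * (Derive f u - p) = 0) by nra.
apply Rmult_integral in Hfac. destruct Hfac; nra.
Qed.

(** * Estimates for small [u] *)

Lemma abs_RInt_0_le (g : R -> R) x M : (forall t, continuous g t) ->
  (forall t, Rabs (g t) <= M) -> Rabs (RInt g 0 x) <= Rabs x * M.
Proof.
intros Hc Hb.
assert (Hex : forall y z, ex_RInt g y z)
  by (intros; apply (ex_RInt_continuous (V:=R_CompleteNormedModule)); auto).
destruct (Rle_dec 0 x).
- rewrite (Rabs_right x) by lra. replace (x * M) with ((x - 0) * M) by ring.
  apply abs_RInt_le_const; auto.
- rewrite <- (opp_RInt_swap (V:=R_CompleteNormedModule)) by auto.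
  change (opp (RInt g x 0)) with (- RInt g x 0).
  rewrite Rabs_Ropp, (Rabs_left x) by lra. replace (- x * M) with ((0 - x) * M) by ring.
  apply abs_RInt_le_const; auto. lra.
Qed.

Lemma continuous_sqrtPw_w a c w : continuous (fun w => sqrtPw a c w) w.
Proof.
apply continuous_sqrt_comp, (ex_derive_continuous (fun w => Pw a c w)).
unfold Pw. auto_derive. auto.
Qed.

Lemma continuous_phi a f u : is_phi a f -> continuous f u.
Proof. intros [Hd _]. apply (ex_derive_continuous f), Hd. Qed.

Lemma continuous_cos_sq_comp (f : R -> R) u : continuous f u ->
  continuous (fun u => cos (f u) ^ 2) u.
Proof.
intros Hf. apply (continuous_comp f (fun x => cos x ^ 2)); auto.
apply (ex_derive_continuous (fun x => cos x ^ 2)). auto_derive. auto.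
Qed.

Lemma continuous_Derive_phi a f u : 10 <= a -> is_phi a f -> continuous (Derive f) u.
Proof.
intros Ha Hp.
apply (continuous_ext (fun u => - sqrtPw a (cos (2 * theta_tilde a)) (cos (f u) ^ 2))).
{ intros; symmetry; apply Derive_phi; auto. }
apply (continuous_opp (fun u => sqrtPw a _ (cos (f u) ^ 2))).
apply (continuous_comp (fun u => cos (f u) ^ 2) (fun w => sqrtPw a _ w)).
- apply continuous_cos_sq_comp, (continuous_phi a); auto.
- apply continuous_sqrtPw_w.
Qed.

Lemma phi_near_linear a f u : 10 <= a -> is_phi a f -> Rabs (f u + a * u) <= Rabs u * /a.
Proof.
intros Ha Hp. pose proof Hp as [Hd [H0 _]].
destruct (inv_bounds a Ha) as [[E1 E2] E3].
destruct (MVT_gen f 0 u (Derive f)) as [xi [_ E]].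
- intros x _. apply Derive_correct, Hd.
- intros x _. apply continuity_pt_filterlim, (continuous_phi a); auto.
- rewrite H0, (Derive_phi a f xi Ha Hp) in E.
  destruct (sqrtPw_bounds _ _ _ (regime_theta_tilde a (f xi) Ha)) as [_ [P2 _]].
  set (p := sqrtPw a _ (cos (f xi) ^ 2)) in *.
  replace (f u + a * u) with (u * (a - p)) by lra.
  rewrite Rabs_mult. apply Rmult_le_compat_l; [apply Rabs_pos|].
  apply Rabs_le. lra.
Qed.

Lemma Gp_bound a f u : 10 <= a -> is_phi a f -> Rabs (Gp a f u) <= 3 * (/a)^3.
Proof.
intros Ha Hp. destruct (theta_tilde_spec a Ha) as [_ Hc].
destruct (inv_bounds a Ha) as [[E1 E2] E3].
assert (2 / a^2 = 2 * (/a)^2) by (field; lra).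
destruct (CC_bounds a Ha) as [[K1 K2] _].
assert (CC a <= /a / 2) by (rewrite Rinv_mult in K2; lra).
destruct (sqrtPw_bounds _ _ _ (regime_theta_tilde a (f u) Ha)) as [P1 [P2 _]].
unfold Gp. rewrite (Derive_phi a f u Ha Hp).
set (p := sqrtPw a _ (cos (f u) ^ 2)) in *.
pose proof (cos_sq_bounds (f u)).
replace (a - - p) with (a + p) by ring.
assert (0 < /(a + p) <= /a)
  by (split; [apply Rinv_0_lt_compat; lra | apply Rinv_le_contravar; lra]).
assert (Rabs (CC a ^ 2 * cos (f u) ^ 2 - cos (2 * theta_tilde a)) <= 3 * (/a)^2)
  by (apply Rabs_le; split; nra).
unfold Rdiv. rewrite Rabs_mult, (Rabs_right (/(a + p))) by lra.
replace (3 * (/a)^3) with (3 * (/a)^2 * /a) by ring.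
apply Rmult_le_compat; auto; try apply Rabs_pos; lra.
Qed.

Lemma continuous_Gp a f u : 10 <= a -> is_phi a f -> continuous (Gp a f) u.
Proof.
intros Ha Hp. unfold Gp.
destruct (sqrtPw_bounds _ _ _ (regime_theta_tilde a (f u) Ha)) as [P1 _].
apply (continuous_mult (fun u => CC a ^ 2 * cos (f u) ^ 2 - cos (2 * theta_tilde a))
                       (fun u => / (a - Derive f u))).
- apply (continuous_minus (fun u => CC a ^ 2 * cos (f u) ^ 2) (fun _ => _));
    [|apply continuous_const].
  apply (continuous_mult (fun _ => _) (fun u => cos (f u) ^ 2)); [apply continuous_const|].
  apply continuous_cos_sq_comp, (continuous_phi a); auto.
- apply (continuous_comp (fun u => a - Derive f u) (fun x => / x)).
  + apply (continuous_minus (fun _ => a) (Derive f)); [apply continuous_const|].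
    apply (continuous_Derive_phi a); auto.
  + apply (ex_derive_continuous (fun x => / x)). auto_derive.
    rewrite (Derive_phi a f u Ha Hp). lra.
Qed.

Lemma Gf_bound a f u : 10 <= a -> is_phi a f -> Rabs (Gf a f u) <= Rabs u * (3 * (/a)^3).
Proof.
intros Ha Hp. apply abs_RInt_0_le.
- intros; apply continuous_Gp; auto.
- intros; apply Gp_bound; auto.
Qed.

Lemma betaf_bound a f u : 10 <= a -> is_phi a f -> Rabs (betaf a f u) <= Rabs u * /a.
Proof.
intros Ha Hp. destruct (inv_bounds a Ha) as [[E1 E2] E3].
destruct (CC_bounds a Ha) as [[K1 K2] _].
assert (CC a <= /a / 2) by (rewrite Rinv_mult in K2; lra).
apply abs_RInt_0_le.
- intros t. apply (continuous_mult (fun _ => _) (fun t => cos (f t) ^ 2));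
    [apply continuous_const|].
  apply continuous_cos_sq_comp, (continuous_phi a); auto.
- intros t. pose proof (cos_sq_bounds (f t)). rewrite Rabs_right; nra.
Qed.

(** * Limits *)

Lemma is_lim_plus_R (f g : R -> R) x (l1 l2 : R) : is_lim f x l1 -> is_lim g x l2 ->
  is_lim (fun t => f t + g t) x (l1 + l2).
Proof. apply is_lim_plus'. Qed.

Lemma is_lim_mult_R (f g : R -> R) x (l1 l2 : R) : is_lim f x l1 -> is_lim g x l2 ->
  is_lim (fun t => f t * g t) x (l1 * l2).
Proof. intros H1 H2. exact (is_lim_mult f g x l1 l2 H1 H2 I). Qed.

Lemma is_lim_opp_R (f : R -> R) x (l : R) : is_lim f x l -> is_lim (fun t => - f t) x (- l).
Proof. intros H. exact (is_lim_opp f x l H). Qed.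

Lemma is_lim_minus_R (f g : R -> R) x (l1 l2 : R) : is_lim f x l1 -> is_lim g x l2 ->
  is_lim (fun t => f t - g t) x (l1 - l2).
Proof. intros. apply is_lim_plus_R; auto. apply is_lim_opp_R; auto. Qed.

Lemma is_lim_div_const_R (f : R -> R) x c (l : R) : is_lim f x l ->
  is_lim (fun t => f t / c) x (l / c).
Proof. intros. apply is_lim_mult_R; auto. apply is_lim_const. Qed.

Lemma is_lim_eq_val (f : R -> R) x (l l' : R) : is_lim f x l' -> l' = l -> is_lim f x l.
Proof. intros H ->. exact H. Qed.

(* Proves [is_lim e x ?l] for [e] built by [+ - * / c], [cos], [sin], [exp] from
   functions with known limits, instantiating [?l] with the limit. *)
Ltac lim_tac :=
  first
  [ eassumption
  | apply is_lim_const
  | match goal with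
    | |- is_lim (fun t => @?f t + @?g t) _ _ => eapply (is_lim_plus_R f g); lim_tac
    | |- is_lim (fun t => @?f t - @?g t) _ _ => eapply (is_lim_minus_R f g); lim_tac
    | |- is_lim (fun t => @?f t * @?g t) _ _ => eapply (is_lim_mult_R f g); lim_tac
    | |- is_lim (fun t => @?f t / ?c) _ _ => eapply (is_lim_div_const_R f _ c); lim_tac
    | |- is_lim (fun t => - @?f t) _ _ => eapply (is_lim_opp_R f); lim_tac
    | |- is_lim (fun t => cos (@?f t)) _ _ =>
        eapply (is_lim_comp_continuous f cos); [lim_tac | apply continuous_cos]
    | |- is_lim (fun t => sin (@?f t)) _ _ =>
        eapply (is_lim_comp_continuous f sin); [lim_tac | apply continuous_sin]
    | |- is_lim (fun t => exp (@?f t)) _ _ =>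
        eapply (is_lim_comp_continuous f exp); [lim_tac | apply continuous_exp]
    end ].

Lemma is_lim_Rinv_p_infty : is_lim (fun a => / a) p_infty 0.
Proof. exact (is_lim_inv (fun a => a) p_infty p_infty (is_lim_id p_infty) ltac:(discriminate)). Qed.

Lemma is_lim_of_inv_bound (f : R -> R) l K :
  (forall a, 10 <= a -> Rabs (f a - l) <= K * /a) -> is_lim f p_infty l.
Proof.
intros H. pose proof is_lim_Rinv_p_infty.
apply (is_lim_le_le_loc (fun a => l - K * /a) (fun a => l + K * /a)).
- exists 10. intros a Ha. specialize (H a ltac:(lra)). apply Rabs_le_between in H. lra.
- apply (is_lim_eq_val _ _ _ (l - K * 0)); [lim_tac | ring].
- apply (is_lim_eq_val _ _ _ (l + K * 0)); [lim_tac | ring].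
Qed.

Lemma pow_inv_le_inv a n : 1 <= a -> (/a) ^ S n <= /a.
Proof.
intros Ha. assert (0 < /a <= 1).
{ split; [apply Rinv_0_lt_compat; lra|]. rewrite <- Rinv_1. apply Rinv_le_contravar; lra. }
assert ((/a) ^ n <= 1) by (rewrite <- (pow1 n); apply pow_incr; lra).
simpl. nra.
Qed.

Lemma Rabs_div_pos u a : 0 < a -> Rabs (u / a) = Rabs u * /a.
Proof.
intros Ha. unfold Rdiv. rewrite Rabs_mult, (Rabs_right (/a)); [reflexivity|].
left; apply Rinv_0_lt_compat; lra.
Qed.

Definition inv_sq (a : R) : R := (/a) ^ 2.
Definition ln_div_sq (a : R) : R := ln a / a * /a.

Lemma is_lim_inv_sq : is_lim inv_sq p_infty 0.
Proof.
apply (is_lim_of_inv_bound _ _ 1). intros a Ha. unfold inv_sq.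
pose proof (pow_inv_le_inv a 1 ltac:(lra)). pose proof (pow2_ge_0 (/a)).
rewrite Rminus_0_r, Rabs_right; lra.
Qed.

Lemma is_lim_ln_div_sq : is_lim ln_div_sq p_infty 0.
Proof.
pose proof is_lim_div_ln_p. pose proof is_lim_Rinv_p_infty.
apply (is_lim_eq_val _ _ _ (0 * 0)); [unfold ln_div_sq; lim_tac | ring].
Qed.

Lemma is_lim_a_CC : is_lim (fun a => a * CC a) p_infty (1/2).
Proof.
apply (is_lim_of_inv_bound _ _ 2). intros a Ha.
pose proof (pow_inv_le_inv a 3 ltac:(lra)). destruct (CC_bounds a Ha) as [_ HC]. lra.
Qed.

Section Blowup.
Variables (uh vh : R) (phi : R -> R -> R).
Hypothesis Hphi : forall a, 0 < a -> is_phi a (phi a).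

Definition phase (a : R) : R := phi a (uh / a).
Definition Gp_scaled (a : R) : R := a * Gp a (phi a) (uh / a).
Definition G_at (a : R) : R := Gf a (phi a) (uh / a).
Definition beta_at (a : R) : R := betaf a (phi a) (uh / a).
(* [exp (± A) = a^2 * E±] at [(u_a, v_a)]. *)
Definition Eplus (a : R) : R := exp (vh / 2 + beta_at a).
Definition Eminus (a : R) : R := inv_sq a * inv_sq a * exp (- (vh / 2 + beta_at a)).

Lemma is_lim_phase : is_lim phase p_infty (- uh).
Proof.
apply (is_lim_of_inv_bound _ _ (Rabs uh)). intros a Ha. unfold phase.
pose proof (phi_near_linear a (phi a) (uh / a) Ha (Hphi a ltac:(lra))) as H.
rewrite Rabs_div_pos in H by lra.
replace (a * (uh / a)) with uh in H by (field; lra).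
destruct (inv_bounds a Ha) as [[E1 E2] _]. pose proof (Rabs_pos uh).
replace (phi a (uh / a) - - uh) with (phi a (uh / a) + uh) by ring.
assert (0 <= Rabs uh * / a) by (apply Rmult_le_pos; lra).
assert (Rabs uh * / a * / a <= Rabs uh * / a) by nra. lra.
Qed.

Lemma is_lim_Gp_scaled : is_lim Gp_scaled p_infty 0.
Proof.
apply (is_lim_of_inv_bound _ _ 3). intros a Ha. unfold Gp_scaled.
pose proof (Gp_bound a (phi a) (uh / a) Ha (Hphi a ltac:(lra))).
pose proof (pow_inv_le_inv a 1 ltac:(lra)). destruct (inv_bounds a Ha) as [_ E].
rewrite Rminus_0_r, Rabs_mult, (Rabs_right a) by lra.
replace (3 * (/a)^3) with ((/a)^2 * 3 * /a) in H by ring.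
simpl in *. nra.
Qed.

Lemma is_lim_G_at : is_lim G_at p_infty 0.
Proof.
apply (is_lim_of_inv_bound _ _ (3 * Rabs uh)). intros a Ha. unfold G_at.
pose proof (Gf_bound a (phi a) (uh / a) Ha (Hphi a ltac:(lra))) as H.
rewrite Rabs_div_pos in H by lra.
pose proof (pow_inv_le_inv a 3 ltac:(lra)). pose proof (Rabs_pos uh).
destruct (inv_bounds a Ha) as [[E1 E2] _].
rewrite Rminus_0_r. simpl in *. nra.
Qed.

Lemma is_lim_beta_at : is_lim beta_at p_infty 0.
Proof.
apply (is_lim_of_inv_bound _ _ (Rabs uh)). intros a Ha. unfold beta_at.
pose proof (betaf_bound a (phi a) (uh / a) Ha (Hphi a ltac:(lra))) as H.
rewrite Rabs_div_pos in H by lra.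
pose proof (pow_inv_le_inv a 1 ltac:(lra)). pose proof (Rabs_pos uh).
destruct (inv_bounds a Ha) as [[E1 E2] _].
rewrite Rminus_0_r. simpl in *. nra.
Qed.

Lemma is_lim_Eplus : is_lim Eplus p_infty (exp (vh / 2)).
Proof.
pose proof is_lim_beta_at.
apply (is_lim_eq_val _ _ _ (exp (vh / 2 + 0))); [unfold Eplus; lim_tac | f_equal; ring].
Qed.

Lemma is_lim_Eminus : is_lim Eminus p_infty 0.
Proof.
pose proof is_lim_beta_at. pose proof is_lim_inv_sq.
apply (is_lim_eq_val _ _ _ (0 * 0 * exp (- (vh / 2 + 0)))); [unfold Eminus; lim_tac | ring].
Qed.

Lemma exp_A a : 10 <= a ->
  exp (Af a (phi a) (uh / a) ((4 * ln a + vh) / (2 * a))) = a^2 * Eplus a /\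
  exp (- Af a (phi a) (uh / a) ((4 * ln a + vh) / (2 * a))) = a^2 * Eminus a.
Proof.
intros Ha. unfold Af, Eplus, Eminus, inv_sq. fold (beta_at a).
replace (a * ((4 * ln a + vh) / (2 * a)) + beta_at a) with (ln a + ln a + (vh / 2 + beta_at a))
  by (field; lra).
rewrite Ropp_plus_distr, !exp_plus, !exp_Ropp, exp_plus, exp_ln by lra.
pose proof (exp_pos (vh / 2 + beta_at a)).
split; [ring | field; lra].
Qed.

Lemma y1_normal_form a : 10 <= a ->
  y1 a (phi a) (uh / a) ((4 * ln a + vh) / (2 * a)) =
  Gp_scaled a * cos (phase a) * (Eplus a - Eminus a) / 2
  - a * CC a * sin (phase a) * (Eplus a + Eminus a) / 2.
Proof.
intros Ha. destruct (exp_A a Ha) as [X1 X2].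
unfold y1, x1, sinh, cosh. rewrite X1, X2. unfold Gp_scaled, phase. field. lra.
Qed.

Lemma y2_normal_form a : 10 <= a ->
  y2 a (phi a) (uh / a) ((4 * ln a + vh) / (2 * a)) =
  a * CC a * (2 * ln_div_sq a + vh / 2 * inv_sq a) - G_at a.
Proof. intros Ha. unfold y2, x2, ln_div_sq, inv_sq, G_at. field. lra. Qed.

Lemma y3_normal_form a : 10 <= a ->
  y3 a (phi a) (uh / a) ((4 * ln a + vh) / (2 * a)) =
  a * CC a * (Eplus a + Eminus a) / 2 * (Gp_scaled a * inv_sq a - 1) * cos (phase a)
  - (a * CC a * (a * CC a) * inv_sq a + Gp_scaled a) * (Eplus a - Eminus a) / 2 * sin (phase a).
Proof.
intros Ha. destruct (exp_A a Ha) as [X1 X2].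
unfold y3, x3, sinh, cosh. rewrite X1, X2. unfold Gp_scaled, phase, inv_sq. field. lra.
Qed.

End Blowup.

Theorem proposition6p1 (uh vh : R) (phi : R -> R -> R)
  (Hphi : forall a : R, 0 < a -> is_phi a (phi a)) :
  is_lim (fun a => y1 a (phi a) (uh / a) ((4 * ln a + vh) / (2 * a))) p_infty
    (sin uh / 4 * exp (vh / 2)) /\
  is_lim (fun a => y2 a (phi a) (uh / a) ((4 * ln a + vh) / (2 * a))) p_infty 0 /\
  is_lim (fun a => y3 a (phi a) (uh / a) ((4 * ln a + vh) / (2 * a))) p_infty
    (- cos uh / 4 * exp (vh / 2)).
Proof.
pose proof (is_lim_phase uh phi Hphi). pose proof (is_lim_Gp_scaled uh phi Hphi).
pose proof (is_lim_G_at uh phi Hphi). pose proof (is_lim_Eplus uh vh phi Hphi).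
pose proof (is_lim_Eminus uh vh phi Hphi).
pose proof is_lim_a_CC. pose proof is_lim_inv_sq. pose proof is_lim_ln_div_sq.
split; [|split]; eapply is_lim_ext_loc.
- exists 10. intros a Ha. symmetry. apply y1_normal_form. lra.
- eapply is_lim_eq_val; [lim_tac|]. rewrite sin_neg. field.
- exists 10. intros a Ha. symmetry. apply y2_normal_form. lra.
- eapply is_lim_eq_val; [lim_tac|]. ring.
- exists 10. intros a Ha. symmetry. apply y3_normal_form. lra.
- eapply is_lim_eq_val; [lim_tac|]. rewrite cos_neg. field.
Qed.
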